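(* Let $A\hookrightarrow B$ be a $G$-Galois extension of $\mathbb{Z}$-graded commutative rings, where $G$ is a finite group. If $A$ is nontrivial only in grade $0$ (i.e. $A_n=0$ for all $n\neq 0$), then $B$ is also nontrivial only in grade $0$.
   Context: All gradings are $\mathbb{Z}$-gradings and rings are unital with unital maps. For commutative (graded) rings $A\subseteq B$ and a finite group $G$, the extension $A\hookrightarrow B$ is called $G$-Galois if $G$ is a subgroup of $\mathrm{Aut}(B/A)$ (in the graded case, $G$ acts by automorphisms preserving the grading), the fixed ring satisfies $B^G=A$, and the map $h:B\otimes_A B\to \mathrm{Map}(G,B)\cong\prod_{g\in G}B$, $h(x\otimes y)(g)=x\cdot g(y)$, is an isomorphism of $B$-algebras. *)

From HB Require Import structures.
From mathcomp Require Import all_boot all_order all_algebra all_fingroup.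
Set Implicit Arguments. Unset Strict Implicit. Unset Printing Implicit Defensive.
Import GRing.Theory.
Local Open Scope ring_scope.

(* A Z-grading of a commutative ring R: a family of additive subgroups R_n
   (given by membership predicates) with 1 in R_0, R_m R_n ⊆ R_(m+n),
   and R = ⊕_n R_n (every element is a finite sum of homogeneous elements of
   distinct degrees, and such a decomposition of 0 is trivial). *)
Definition is_Zgrading (R : comPzRingType) (Rn : int -> R -> Prop) : Prop :=
  (forall n, Rn n 0) /\
      (forall n x y, Rn n x -> Rn n y -> Rn n (x - y)) /\
      Rn 0%R 1 /\
      (forall m n x y, Rn m x -> Rn n y -> Rn (m + n)%R (x * y)) /\
      (forall b : R, exists (s : seq int) (f : int -> R),
          [/\ uniq s, (forall n, Rn n (f n)) & b = \sum_(n <- s) f n]) /\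
      (forall (s : seq int) (f : int -> R), uniq s -> (forall n, Rn n (f n)) ->
          \sum_(n <- s) f n = 0 -> forall n, n \in s -> f n = 0).

(* The tensor product B ⊗_A B (A acting through iota : A -> B), presented as
   formal finite sums  Σ x_i ⊗ y_i  (lists of pairs) modulo the congruence
   generated by biadditivity, A-balancedness and 0 ⊗ y = 0. [tensor_eq s t]
   means that s and t represent the same element of B ⊗_A B. *)
Inductive tensor_eq (A B : comPzRingType) (iota : A -> B) :
    seq (B * B) -> seq (B * B) -> Prop :=
  | te_refl s : tensor_eq iota s s
  | te_sym s t : tensor_eq iota s t -> tensor_eq iota t s
  | te_trans s t u : tensor_eq iota s t -> tensor_eq iota t u -> tensor_eq iota s u
  | te_perm s t : perm_eq s t -> tensor_eq iota s t
  | te_cat s1 t1 s2 t2 : tensor_eq iota s1 t1 -> tensor_eq iota s2 t2 ->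
      tensor_eq iota (s1 ++ s2) (t1 ++ t2)
  | te_addl x x' y : tensor_eq iota [:: (x + x', y)] [:: (x, y); (x', y)]
  | te_addr x y y' : tensor_eq iota [:: (x, y + y')] [:: (x, y); (x, y')]
  | te_bal x a y : tensor_eq iota [:: (x * iota a, y)] [:: (x, iota a * y)]
  | te_zero y : tensor_eq iota [:: (0, y)] [::].

Definition is_ring_action (gT : finGroupType) (B : comPzRingType)
    (act : gT -> B -> B) : Prop :=
  [/\ (forall g x y, act g (x + y) = act g x + act g y),
      (forall g x y, act g (x * y) = act g x * act g y),
      (forall g, act g 1 = 1),
      (forall x, act 1%g x = x) &
      (forall g h x, act (g * h)%g x = act g (act h x))].

Definition graded_Galois (gT : finGroupType) (A B : comPzRingType)
    (An : int -> A -> Prop) (Bn : int -> B -> Prop)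
    (iota : {rmorphism A -> B}) (act : gT -> B -> B) : Prop :=
  is_Zgrading An /\ is_Zgrading Bn /\
      injective iota /\ (forall n a, An n a -> Bn n (iota a)) /\
      (* G is a subgroup of Aut(B/A) of grading-preserving automorphisms *)
      is_ring_action act /\
      (forall g, (forall x, act g x = x) -> g = 1%g) /\
      (forall g a, act g (iota a) = iota a) /\
      (forall g n b, Bn n b -> Bn n (act g b)) /\
      (forall b, (forall g, act g b = b) -> exists a, b = iota a) /\
      (* h : B ⊗_A B -> Map(G,B), x ⊗ y |-> (g |-> x g(y)) is surjective *)
      (forall f : gT -> B, exists s : seq (B * B),
          forall g, f g = \sum_(p <- s) p.1 * act g p.2) /\
      (* ... and injective *)
      (forall s : seq (B * B),
          (forall g, \sum_(p <- s) p.1 * act g p.2 = 0) -> tensor_eq iota s [::]).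

From HB Require Import structures.
From mathcomp Require Import all_boot all_order all_algebra all_fingroup.
From mathcomp Require Import zify.
From Stdlib Require Import ClassicalEpsilon.
Set Implicit Arguments. Unset Strict Implicit. Unset Printing Implicit Defensive.
Import GRing.Theory.
Local Open Scope ring_scope.

(* Let c = 1 + N be the unipotent Jordan block of size m + 1 over B. As c is
   invertible and commutes with scalar matrices, b = sum_n b_n |-> sum_n c^n b_n
   is a ring morphism psi : B -> M_(m+1)(B), and it is A-linear because A sits
   in degree 0. Let e = sum_i x_i ⊗ y_i in B ⊗_A B be the preimage under h of
   the indicator function of the identity of G. Then (b ⊗ 1) e = (1 ⊗ b) e, and
   applying x ⊗ y |-> x psi(y) gives (b - psi b) E = 0 for E = sum_i x_i psi(y_i).
   Since sum_i x_i y_i = h(e)(1) = 1, E - 1 is strictly upper triangular, so E is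
   invertible and psi b = b. For b of degree n <> 0 this says c^n b = b, hence
   c^|n| b = b, and taking m = |n| the top-right entry of c^m b is b, whereas
   that of the scalar matrix b is 0. *)

Section IntPow.
Variables (R : pzRingType) (u v : R).

Definition ipow (z : int) : R :=
  match z with Posz n => u ^+ n | Negz n => v ^+ n.+1 end.

Hypotheses (uv : u * v = 1) (vu : v * u = 1).

Lemma mulr_expr_cancel a b c : u ^+ (a + c) * v ^+ (b + c) = u ^+ a * v ^+ b.
Proof.
elim: c => [|c IH]; first by rewrite !addn0.
by rewrite !addnS exprSr exprS mulrA -(mulrA _ u) uv mulr1.
Qed.

Lemma ipow_subn (a b : nat) : ipow (a%:Z - b%:Z) = u ^+ a * v ^+ b.
Proof.
case: (leqP b a) => [le_ba | lt_ab].
  rewrite subzn //= -[in RHS](subnK le_ba) -[in X in _ = _ * X](add0n b).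
  by rewrite mulr_expr_cancel expr0 mulr1.
have -> : a%:Z - b%:Z = Negz (b - a).-1 by rewrite NegzE; lia.
rewrite /= prednK ?subn_gt0 // -[in RHS](subnK (ltnW lt_ab)).
by rewrite -[in X in _ = X * _](add0n a) mulr_expr_cancel expr0 mul1r.
Qed.

Lemma ipowD z w : ipow (z + w) = ipow z * ipow w.
Proof.
have int_subn (x : int) : exists a b : nat, x = a%:Z - b%:Z.
  case: x => [a|b]; first by exists a, 0%N; rewrite subr0.
  by exists 0%N, b.+1; rewrite NegzE sub0r.
have [a [b ->]] := int_subn z; have [a' [b' ->]] := int_subn w.
have -> : a%:Z - b%:Z + (a'%:Z - b'%:Z) = (a + a')%N%:Z - (b + b')%N%:Z by lia.
have comm_uv : GRing.comm u v by rewrite /GRing.comm uv vu.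
rewrite !ipow_subn !exprD -!mulrA; congr (_ * _); rewrite !mulrA.
by rewrite (commrX a' (commr_sym (commrX b comm_uv))).
Qed.

Lemma ipow_fix_normr z x : ipow z * x = x -> u ^+ `|z|%N * x = x.
Proof.
case: z => [n|n] //= fix_x.
have := mulr_expr_cancel 0 0 n.+1; rewrite !add0n expr0 mulr1 => uv_n.
by rewrite -{1}fix_x mulrA uv_n mul1r.
Qed.

End IntPow.

Lemma mul1D_sum_exprN (R : pzRingType) (x : R) n :
  x ^+ n = 0 -> (1 + x) * \sum_(i < n) (- x) ^+ i = 1.
Proof.
move=> xn0; have := subrX1 (- x) n.
by rewrite exprNn xn0 mulr0 sub0r -opprD (addrC x) mulNr => /oppr_inj <-.
Qed.

Lemma sum_exprN_mul1D (R : pzRingType) (x : R) n :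
  x ^+ n = 0 -> (\sum_(i < n) (- x) ^+ i) * (1 + x) = 1.
Proof.
have comm_1Dx : GRing.comm (1 + x) (- x).
  by rewrite /GRing.comm mulrDl mulrDr mul1r mulr1 mulrN mulNr.
have comm_sum : GRing.comm (1 + x) (\sum_(i < n) (- x) ^+ i).
  by apply: commr_sum => i _; apply: commrX.
by rewrite -comm_sum; apply: mul1D_sum_exprN.
Qed.

Section StrictlyUpper.
Variables (R : pzRingType) (k : nat).
Implicit Types (A D : 'M[R]_k).

Definition strictly_upper A := forall i j : 'I_k, (j <= i)%N -> A i j = 0.

Lemma strictly_upper0 : strictly_upper 0.
Proof. by move=> i j _; rewrite mxE. Qed.

Lemma strictly_upperD A D :
  strictly_upper A -> strictly_upper D -> strictly_upper (A + D).
Proof. by move=> uA uD i j le_ji; rewrite mxE uA // uD // addr0. Qed.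

Lemma strictly_upperN A : strictly_upper A -> strictly_upper (- A).
Proof. by move=> uA i j le_ji; rewrite mxE uA // oppr0. Qed.

Lemma strictly_upper_sum (I : Type) (r : seq I) (F : I -> 'M[R]_k) :
  (forall i, strictly_upper (F i)) -> strictly_upper (\sum_(i <- r) F i).
Proof.
move=> uF; elim: r => [|a r IH]; first by rewrite big_nil; apply: strictly_upper0.
by rewrite big_cons; apply: strictly_upperD.
Qed.

Lemma strictly_upperZ a A : strictly_upper A -> strictly_upper (a *: A).
Proof. by move=> uA i j le_ji; rewrite mxE uA // mulr0. Qed.

Lemma strictly_upperM A D :
  strictly_upper A -> strictly_upper D -> strictly_upper (A * D).
Proof.
move=> uA uD i j le_ji; rewrite -mulmxE mxE big1 // => l _.
case: (leqP l i) => [le_li | lt_il]; first by rewrite uA // mul0r.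
by rewrite uD ?mulr0 // (leq_trans le_ji) // ltnW.
Qed.

Lemma strictly_upper_exprE D n (i j : 'I_k) :
  strictly_upper D -> (j < i + n)%N -> (D ^+ n) i j = 0.
Proof.
move=> uD; elim: n i j => [|n IH] i j lt_j_in.
  by rewrite expr0 mxE; case: eqVneq => // eq_ij; move: lt_j_in; rewrite eq_ij; lia.
rewrite exprSr -mulmxE mxE big1 // => l _.
case: (ltnP l (i + n)) => [lt_l_in | le_in_l]; first by rewrite IH // mul0r.
by rewrite uD ?mulr0 //; lia.
Qed.

Lemma strictly_upper_exprS D n : strictly_upper D -> strictly_upper (D ^+ n.+1).
Proof. by move=> uD i j le_ji; apply: strictly_upper_exprE => //; lia. Qed.

Lemma strictly_upper_nilpotent D : strictly_upper D -> D ^+ k = 0.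
Proof.
move=> uD; apply/matrixP => i j; rewrite mxE strictly_upper_exprE //.
by have := ltn_ord j; lia.
Qed.

Lemma mulr_unipotent_eq0 Z D : strictly_upper D -> Z * (1 + D) = 0 -> Z = 0.
Proof.
move=> uD Z1D0; rewrite -[Z]mulr1 -(mul1D_sum_exprN (strictly_upper_nilpotent uD)).
by rewrite mulrA Z1D0 mul0r.
Qed.

Definition unipotent A := strictly_upper (A - 1).

Lemma unipotent1 : unipotent 1.
Proof. by rewrite /unipotent subrr; apply: strictly_upper0. Qed.

Lemma unipotentM A D : unipotent A -> unipotent D -> unipotent (A * D).
Proof.
rewrite /unipotent => uA uD; have -> : A * D - 1 = (A - 1) * (D - 1) + (A - 1) + (D - 1).
  by rewrite mulrBl mulrBr !mul1r mulr1 -addrA (addrC (A - 1)) addrA subrK addrA subrK.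
by apply: strictly_upperD => //; apply: strictly_upperD => //; apply: strictly_upperM.
Qed.

Lemma unipotentX A n : unipotent A -> unipotent (A ^+ n).
Proof.
move=> uA; elim: n => [|n IH]; first by rewrite expr0; apply: unipotent1.
by rewrite exprS; apply: unipotentM.
Qed.

Lemma unipotent_ipow A D z : unipotent A -> unipotent D -> unipotent (ipow A D z).
Proof. by case: z => n uA uD /=; apply: unipotentX. Qed.

End StrictlyUpper.

Section JordanBlock.
Variables (R : pzRingType) (m : nat).

Definition shift_mx : 'M[R]_m.+1 := \matrix_(i, j) (i.+1 == j)%:R.

Lemma strictly_upper_shift_mx : strictly_upper shift_mx.
Proof. by move=> i j le_ji; rewrite mxE; case: eqP => // eq_ij; lia. Qed.

Lemma shift_mx_exprE n (i j : 'I_m.+1) : (shift_mx ^+ n) i j = ((i + n)%N == j)%:R.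
Proof.
elim: n i j => [|n IH] i j; first by rewrite expr0 addn0 mxE.
rewrite exprSr -mulmxE mxE; case: (ltnP (i + n) m.+1) => [lt_in | le_in].
  rewrite (bigD1 (Ordinal lt_in)) //= big1 ?addr0 => [|l ne_l].
    by rewrite IH mxE eqxx mul1r addnS.
  rewrite IH; case: eqP => [eq_l | _]; last by rewrite mul0r.
  by move: ne_l; rewrite -(inj_eq val_inj) /= eq_l eqxx.
rewrite big1 => [|l _]; first by case: eqP => // eq_j; have := ltn_ord j; lia.
by rewrite IH; case: eqP => [eq_l | _]; [have := ltn_ord l; lia | rewrite mul0r].
Qed.

Definition jordan_mx : 'M[R]_m.+1 := 1 + shift_mx.
Definition jordan_inv : 'M[R]_m.+1 := \sum_(i < m.+1) (- shift_mx) ^+ i.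
Definition jordan_pow (z : int) := ipow jordan_mx jordan_inv z.

Lemma jordan_powD z w : jordan_pow (z + w) = jordan_pow z * jordan_pow w.
Proof.
have shift_nil := strictly_upper_nilpotent strictly_upper_shift_mx.
exact: (ipowD (mul1D_sum_exprN shift_nil) (sum_exprN_mul1D shift_nil)).
Qed.

Lemma unipotent_jordan_pow z : unipotent (jordan_pow z).
Proof.
apply: unipotent_ipow; first by rewrite /unipotent addrC addKr; apply: strictly_upper_shift_mx.
rewrite /unipotent /jordan_inv big_ord_recl expr0 addrAC subrr add0r.
by apply: strictly_upper_sum => i; apply/strictly_upper_exprS/strictly_upperN/strictly_upper_shift_mx.
Qed.

Lemma jordan_mx_expr_corner : (jordan_mx ^+ m) ord0 ord_max = 1.
Proof.
rewrite /jordan_mx addrC exprD1n summxE (bigD1 ord_max) //= big1 ?addr0.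
  by rewrite mulmxnE shift_mx_exprE add0n eqxx binn mulr1n.
move=> i ne_i; rewrite mulmxnE shift_mx_exprE add0n.
case: eqP => [eq_i | _]; last by rewrite mul0rn.
by move: ne_i; rewrite -(inj_eq val_inj) /= eq_i eqxx.
Qed.

End JordanBlock.

Lemma jordan_pow_fix_eq0 (R : comPzRingType) (n : int) (b : R) :
  n != 0 -> jordan_pow R `|n|%N n * b%:M = b%:M -> b = 0.
Proof.
move=> n_neq0; set m := `|n|%N => fix_b.
have shift_nil := strictly_upper_nilpotent (@strictly_upper_shift_mx R m).
have := ipow_fix_normr (mul1D_sum_exprN shift_nil) fix_b.
move=> /(congr1 (fun M : 'M[R]_m.+1 => M ord0 ord_max)).
rewrite /= -mulmxE mul_mx_scalar !mxE jordan_mx_expr_corner mulr1.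
have /negbTE -> : ord0 != ord_max :> 'I_m.+1.
  by rewrite -(inj_eq val_inj) /= eq_sym -lt0n absz_gt0.
by rewrite mulr0n.
Qed.

Section GradedRing.
Variables (B : comPzRingType) (Bn : int -> B -> Prop).
Hypothesis gradingB : is_Zgrading Bn.

Lemma grade0 n : Bn n 0.
Proof. by case: gradingB => B0 _; apply: B0. Qed.

Lemma gradeB n x y : Bn n x -> Bn n y -> Bn n (x - y).
Proof. by case: gradingB => _ [BB _]; apply: BB. Qed.

Lemma gradeN n x : Bn n x -> Bn n (- x).
Proof. by rewrite -sub0r; apply/gradeB/grade0. Qed.

Lemma gradeD n x y : Bn n x -> Bn n y -> Bn n (x + y).
Proof. by move=> Bx By; rewrite -[y]opprK; apply/gradeB/gradeN. Qed.

Lemma gradeM m n x y : Bn m x -> Bn n y -> Bn (m + n) (x * y).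
Proof. by case: gradingB => _ [_ [_ [BM _]]]; apply: BM. Qed.

Definition homogeneous (f : int -> B) := forall n, Bn n (f n).

Lemma graded_decomp b : exists (s : seq int) (f : int -> B),
  [/\ uniq s, homogeneous f & b = \sum_(n <- s) f n].
Proof. by case: gradingB => _ [_ [_ [_ [Bdec _]]]]; apply: Bdec. Qed.

Lemma graded_decomp_eq0 s f : uniq s -> homogeneous f ->
  \sum_(n <- s) f n = 0 -> forall n, n \in s -> f n = 0.
Proof. by case: gradingB => _ [_ [_ [_ [_ Buniq]]]]; apply: Buniq. Qed.

Lemma concentrated_grade0 :
  (forall n, n != 0 -> forall b, Bn n b -> b = 0) -> forall b, Bn 0 b.
Proof.
move=> conc b; have [s [f [_ homf ->]]] := graded_decomp b.
apply: (big_ind (Bn 0)); [exact: grade0 | exact: gradeD | move=> l _].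
by have [<- // | l_neq0] := eqVneq l 0; rewrite (conc l l_neq0 _ (homf l)); apply: grade0.
Qed.

Definition pad (s : seq int) (f : int -> B) (l : int) := if l \in s then f l else 0.

Lemma homogeneous_pad s f : homogeneous f -> homogeneous (pad s f).
Proof. by move=> homf n; rewrite /pad; case: ifP => _; [apply: homf | apply: grade0]. Qed.

Lemma sum_pad (V : nmodType) (F : int -> B -> V) s f L :
  (forall l, F l 0 = 0) -> uniq s -> uniq L -> {subset s <= L} ->
  \sum_(l <- L) F l (pad s f l) = \sum_(l <- s) F l (f l).
Proof.
move=> F0 s_uniq L_uniq sL.
under eq_bigr => l _ do rewrite [F l _]fun_if F0.
rewrite -big_mkcond -big_filter; apply: perm_big; apply: uniq_perm => //.
  exact: filter_uniq.
by move=> l; rewrite mem_filter andb_idr //; apply: sL.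
Qed.

Lemma sum_pad_id s f L : uniq s -> uniq L -> {subset s <= L} ->
  \sum_(l <- L) pad s f l = \sum_(l <- s) f l.
Proof. exact: (@sum_pad _ (fun _ x => x)). Qed.

Lemma common_graded_decomp x y : exists (L : seq int) (fx fy : int -> B),
  [/\ uniq L, homogeneous fx, homogeneous fy,
      x = \sum_(l <- L) fx l & y = \sum_(l <- L) fy l].
Proof.
have [s1 [f1 [s1_uniq homf1 ->]]] := graded_decomp x.
have [s2 [f2 [s2_uniq homf2 ->]]] := graded_decomp y.
exists (undup (s1 ++ s2)), (pad s1 f1), (pad s2 f2).
split; rewrite ?undup_uniq //; try exact: homogeneous_pad.
all: by apply/esym/sum_pad_id; rewrite ?undup_uniq // => l sl; rewrite mem_undup mem_cat sl ?orbT.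
Qed.

Lemma graded_sum_indep (V : nmodType) (F : int -> B -> V) s1 f1 s2 f2 :
  (forall l, F l 0 = 0) -> uniq s1 -> uniq s2 -> homogeneous f1 -> homogeneous f2 ->
  \sum_(l <- s1) f1 l = \sum_(l <- s2) f2 l ->
  \sum_(l <- s1) F l (f1 l) = \sum_(l <- s2) F l (f2 l).
Proof.
move=> F0 s1_uniq s2_uniq homf1 homf2 eq_sum; set L := undup (s1 ++ s2).
have L_uniq : uniq L by apply: undup_uniq.
have s1L : {subset s1 <= L} by move=> l sl; rewrite mem_undup mem_cat sl.
have s2L : {subset s2 <= L} by move=> l sl; rewrite mem_undup mem_cat sl orbT.
have eq_pad l : l \in L -> pad s1 f1 l = pad s2 f2 l.
  move=> Ll; apply/eqP; rewrite -subr_eq0; apply/eqP; move: l Ll.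
  apply: (graded_decomp_eq0 (f := fun l => pad s1 f1 l - pad s2 f2 l)) => // [n|].
    by apply: gradeB; apply: homogeneous_pad.
  by rewrite sumrB !sum_pad_id // eq_sum subrr.
rewrite -(sum_pad f1 F0 s1_uniq L_uniq s1L) -(sum_pad f2 F0 s2_uniq L_uniq s2L).
by apply: eq_big_seq => l /eq_pad ->.
Qed.

Lemma graded_decomp_pair b : exists p : seq int * (int -> B),
  [/\ uniq p.1, homogeneous p.2 & b = \sum_(n <- p.1) p.2 n].
Proof. by have [s [f decb]] := graded_decomp b; exists (s, f). Qed.

Definition homog_decomp (b : B) : seq int * (int -> B) :=
  proj1_sig (constructive_indefinite_description _ (graded_decomp_pair b)).

Lemma homog_decompP b : [/\ uniq (homog_decomp b).1, homogeneous (homog_decomp b).2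
  & b = \sum_(n <- (homog_decomp b).1) (homog_decomp b).2 n].
Proof. exact: proj2_sig (constructive_indefinite_description _ (graded_decomp_pair b)). Qed.

Section Twist.
Variables (R : pzRingType) (chi : int -> R) (j : {rmorphism B -> R}).

(* For a character chi : Z -> R^* commuting with the image of j, this is the
   ring morphism b_n |-> chi n * j b_n through which the grading acts. *)
Definition twist (b : B) : R :=
  \sum_(l <- (homog_decomp b).1) chi l * j ((homog_decomp b).2 l).

Lemma twist_decomp s f : uniq s -> homogeneous f ->
  twist (\sum_(l <- s) f l) = \sum_(l <- s) chi l * j (f l).
Proof.
move=> s_uniq homf; have [d_uniq homd d_sum] := homog_decompP (\sum_(l <- s) f l).
rewrite /twist; apply: (graded_sum_indep (F := fun l x => chi l * j x)) => // l.
by rewrite rmorph0 mulr0.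
Qed.

Lemma twist_homog l x : Bn l x -> twist x = chi l * j x.
Proof.
move=> Blx; have homf : homogeneous (fun n => if n == l then x else 0).
  by move=> n; case: eqP => [-> | _] //; apply: grade0.
by have := twist_decomp (s := [:: l]) isT homf; rewrite !big_seq1 eqxx.
Qed.

Lemma twist0 : twist 0 = 0.
Proof. by rewrite (twist_homog (grade0 0)) rmorph0 mulr0. Qed.

Lemma twistD x y : twist (x + y) = twist x + twist y.
Proof.
have [L [fx [fy [L_uniq homx homy -> ->]]]] := common_graded_decomp x y.
rewrite -big_split !twist_decomp // => [|n]; last by apply: gradeD.
by rewrite -big_split; apply: eq_bigr => l _; rewrite rmorphD mulrDr.
Qed.

Lemma twist_sum (I : Type) (r : seq I) (F : I -> B) :
  twist (\sum_(i <- r) F i) = \sum_(i <- r) twist (F i).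
Proof. exact: (big_morph twist twistD twist0). Qed.

Hypotheses (chiD : forall m n, chi (m + n) = chi m * chi n)
           (chi_comm : forall n b, chi n * j b = j b * chi n).

Lemma twistM x y : twist (x * y) = twist x * twist y.
Proof.
have [s [f [s_uniq homf ->]]] := graded_decomp x.
have [t [g [t_uniq homg ->]]] := graded_decomp y.
rewrite !twist_decomp // big_distrlr /= twist_sum big_distrl /=; apply: eq_bigr => l _.
rewrite twist_sum big_distrr /=; apply: eq_bigr => l' _.
rewrite (twist_homog (gradeM (homf l) (homg l'))) chiD rmorphM.
by rewrite -!mulrA; congr (_ * _); rewrite !mulrA chi_comm.
Qed.

End Twist.

End GradedRing.

(* Representative of (b ⊗ 1 - 1 ⊗ b) * s in B ⊗ B. *)
Definition tensor_commutator (B : comPzRingType) (b : B) (s : seq (B * B)) :=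
  [seq (b * p.1, p.2) | p <- s] ++ [seq (- p.1, b * p.2) | p <- s].

(* The element e of B ⊗_A B with h(e) = [g |-> (g == 1)] satisfies
   h((b ⊗ 1 - 1 ⊗ b) e) = 0, since h(e) vanishes off the identity. *)
Lemma galois_separability (gT : finGroupType) (A B : comPzRingType)
    (iota : A -> B) (act : gT -> B -> B) :
  (forall g x y, act g (x * y) = act g x * act g y) -> (forall x, act 1%g x = x) ->
  (forall f : gT -> B, exists s : seq (B * B),
      forall g, f g = \sum_(p <- s) p.1 * act g p.2) ->
  (forall s : seq (B * B),
      (forall g, \sum_(p <- s) p.1 * act g p.2 = 0) -> tensor_eq iota s [::]) ->
  exists s : seq (B * B), \sum_(p <- s) p.1 * p.2 = 1 /\
    forall b, tensor_eq iota (tensor_commutator b s) [::].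
Proof.
move=> actM act1 h_surj h_inj.
have [s hs] := h_surj (fun g => if g == 1%g then 1 else 0).
exists s; split.
  by have := hs 1%g; rewrite eqxx => ->; apply: eq_bigr => p _; rewrite act1.
move=> b; apply: h_inj => g; rewrite big_cat !big_map /=.
have -> : \sum_(p <- s) b * p.1 * act g p.2 = b * \sum_(p <- s) p.1 * act g p.2.
  by rewrite mulr_sumr; apply: eq_bigr => p _; rewrite mulrA.
have -> : \sum_(p <- s) - p.1 * act g (b * p.2) =
          - (act g b * \sum_(p <- s) p.1 * act g p.2).
  by rewrite mulr_sumr -sumrN; apply: eq_bigr => p _; rewrite actM mulNr mulrCA.
rewrite -hs; case: eqP => [-> | _]; first by rewrite act1 subrr.
by rewrite !mulr0 subrr.
Qed.

Section TensorMap.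
Variables (A B : comPzRingType) (iota : A -> B) (R : pzRingType).
Variables (f : {rmorphism B -> R}) (g : B -> R).
Hypotheses (gD : {morph g : x y / x + y}) (gM : {morph g : x y / x * y})
           (g_iota : forall a, g (iota a) = f (iota a)).

Definition tensor_map (s : seq (B * B)) : R := \sum_(p <- s) f p.1 * g p.2.

Lemma tensor_map_eq s t : tensor_eq iota s t -> tensor_map s = tensor_map t.
Proof.
rewrite /tensor_map; elim=> {s t}.
- by [].
- by move=> s t _ ->.
- by move=> s t u _ -> _ ->.
- by move=> s t; apply: perm_big.
- by move=> s1 t1 s2 t2 _ eq1 _ eq2; rewrite !big_cat eq1 eq2.
- by move=> x x' y; rewrite !big_cons !big_nil /= !addr0 rmorphD mulrDl.
- by move=> x y y'; rewrite !big_cons !big_nil /= !addr0 gD mulrDr.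
- by move=> x a y; rewrite !big_cons !big_nil /= !addr0 rmorphM gM g_iota mulrA.
- by move=> y; rewrite big_cons big_nil /= rmorph0 mul0r addr0.
Qed.

Hypothesis fg_comm : forall x y, f x * g y = g y * f x.

Lemma tensor_map_commutator b s : tensor_eq iota (tensor_commutator b s) [::] ->
  f b * tensor_map s = g b * tensor_map s.
Proof.
move=> /tensor_map_eq; rewrite /tensor_map big_nil big_cat !big_map /=.
move=> /eqP; rewrite addr_eq0 => /eqP eq_sums; rewrite !mulr_sumr.
rewrite (eq_bigr (fun p => f (b * p.1) * g p.2)) => [|p _]; last by rewrite rmorphM mulrA.
rewrite eq_sums -sumrN; apply: eq_bigr => p _.
by rewrite rmorphN mulNr opprK gM !mulrA fg_comm.
Qed.

End TensorMap.

Section JordanTwist.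
Variables (B : comPzRingType) (Bn : int -> B -> Prop) (gradingB : is_Zgrading Bn).
Variable m : nat.

Definition jordan_twist : B -> 'M[B]_m.+1 := twist gradingB (jordan_pow B m) scalar_mx.

Lemma jordan_twist_homog n x : Bn n x -> jordan_twist x = jordan_pow B m n * x%:M.
Proof. exact: twist_homog. Qed.

Lemma jordan_twistD : {morph jordan_twist : x y / x + y}.
Proof. exact: twistD. Qed.

Lemma jordan_twistM : {morph jordan_twist : x y / x * y}.
Proof.
apply: twistM => [n n' | n b]; first exact: jordan_powD.
by rewrite -mulmxE scalar_mxC.
Qed.

Lemma strictly_upper_jordan_twistB x : strictly_upper (jordan_twist x - x%:M).
Proof.
have [s [f [_ homf ->]]] := graded_decomp gradingB x.
rewrite /jordan_twist twist_sum -/jordan_twist raddf_sum -sumrB.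
apply: strictly_upper_sum => l.
rewrite (jordan_twist_homog (homf l)) -[X in _ - X]mul1r -mulrBl -mulmxE mul_mx_scalar.
exact/strictly_upperZ/unipotent_jordan_pow.
Qed.

End JordanTwist.

Section GaloisJordanTwist.
Variables (gT : finGroupType) (A B : comPzRingType) (Bn : int -> B -> Prop).
Variables (iota : {rmorphism A -> B}) (act : gT -> B -> B).
Hypotheses (gradingB : is_Zgrading Bn) (iota_grade0 : forall a, Bn 0 (iota a)).
Hypotheses (actM : forall g x y, act g (x * y) = act g x * act g y)
           (act1 : forall x, act 1%g x = x).
Hypothesis h_surj : forall f : gT -> B, exists s : seq (B * B),
  forall g, f g = \sum_(p <- s) p.1 * act g p.2.
Hypothesis h_inj : forall s : seq (B * B),
  (forall g, \sum_(p <- s) p.1 * act g p.2 = 0) -> tensor_eq iota s [::].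

Lemma jordan_twist_galois m b : jordan_twist gradingB m b = b%:M.
Proof.
set psi := jordan_twist gradingB m.
have psi_iota a : psi (iota a) = (iota a)%:M.
  by rewrite /psi (jordan_twist_homog _ _ (iota_grade0 a)) /= expr0 mul1r.
have [s [s_unit s_comm]] := galois_separability actM act1 h_surj h_inj.
set E := tensor_map scalar_mx psi s.
have E_unipotent : strictly_upper (E - 1).
  rewrite -[X in _ - X]/((1 : B)%:M) -s_unit raddf_sum /= -sumrB.
  apply: strictly_upper_sum => p; rewrite scalar_mxM -mulrBr -mulmxE mul_scalar_mx.
  exact/strictly_upperZ/strictly_upper_jordan_twistB.
have psi_commE : b%:M * E = psi b * E.
  apply: (tensor_map_commutator (jordan_twistD _ _) (jordan_twistM _ _) psi_iota) => //.
  by move=> x y; rewrite -mulmxE scalar_mxC.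
apply/eqP; rewrite eq_sym -subr_eq0; apply/eqP.
apply: (mulr_unipotent_eq0 E_unipotent).
by rewrite [1 + _]addrC subrK mulrBl psi_commE subrr.
Qed.

End GaloisJordanTwist.

Theorem theorem3p2 (gT : finGroupType) (A B : comPzRingType)
    (An : int -> A -> Prop) (Bn : int -> B -> Prop)
    (iota : {rmorphism A -> B}) (act : gT -> B -> B) :
  graded_Galois An Bn iota act ->
  (forall n : int, n != 0%R -> forall a : A, An n a -> a = 0%R) ->
  forall n : int, n != 0%R -> forall b : B, Bn n b -> b = 0%R.
Proof.
move=> [gradingA [gradingB [_ [iota_homog [[_ actM _ act1 _] [_ [_ [_ [_ [h_surj h_inj]]]]]]]]]].
move=> A_concentrated n n_neq0 b Bnb.
have iota_grade0 a : Bn 0 (iota a).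
  exact/iota_homog/(concentrated_grade0 gradingA A_concentrated).
apply: (jordan_pow_fix_eq0 n_neq0).
rewrite -(jordan_twist_homog gradingB _ Bnb).
exact: (jordan_twist_galois gradingB iota_grade0 actM act1 h_surj h_inj).
Qed.
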